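(* Let $R>0$, let $(\beta_j)_{j\ge1}$ and $(\Gamma_n)_{n\ge0}$ be positive sequences, and let $(\mathbb{A}_{\boldsymbol\nu,\lambda})_{\boldsymbol\nu\in\mathcal I,\lambda\in\mathbb{N}_0}$ be a nonnegative sequence with $\mathbb{A}_{\boldsymbol\nu,0}=\delta_{\boldsymbol\nu,\mathbf 0}$, $\mathbb{A}_{\boldsymbol\nu,\lambda}=0$ for $\lambda>|\boldsymbol\nu|$, and otherwise $$\mathbb{A}_{\boldsymbol\nu+\mathbf e_j,\lambda}=R\sum_{\mathbf m\le\boldsymbol\nu}\binom{\boldsymbol\nu}{\mathbf m}\boldsymbol\beta^{\boldsymbol\nu-\mathbf m+\mathbf e_j}\,\Gamma_{|\boldsymbol\nu-\mathbf m|+1}\,\mathbb{A}_{\mathbf m,\lambda-1}\quad\text{for all }\boldsymbol\nu\in\mathcal I,\ j\ge1,\ 1\le\lambda\le|\boldsymbol\nu|+1.$$ Define $\mathbb{B}_{n,1}:=\Gamma_n$ for $n\ge1$ and $\mathbb{B}_{n,\lambda}:=\sum_{i=\lambda-1}^{n-1}\binom{n-1}{i}\Gamma_{n-i}\mathbb{B}_{i,\lambda-1}$ for $n\ge\lambda\ge2$. Then for all $\boldsymbol\nu\in\mathcal I$ with $\boldsymbol\nu\ne\mathbf 0$ and all $1\le\lambda\le|\boldsymbol\nu|$, $$\mathbb{A}_{\boldsymbol\nu,\lambda}=R^\lambda\,\boldsymbol\beta^{\boldsymbol\nu}\,\mathbb{B}_{|\boldsymbol\nu|,\lambda}.$$ Moreover,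 if the recursion holds with ''$\le$'' in place of ''$=$'' (with the same conditions $\mathbb{A}_{\boldsymbol\nu,0}=\delta_{\boldsymbol\nu,\mathbf0}$ and $\mathbb{A}_{\boldsymbol\nu,\lambda}=0$ for $\lambda>|\boldsymbol\nu|$), then $\mathbb{A}_{\boldsymbol\nu,\lambda}\le R^\lambda\boldsymbol\beta^{\boldsymbol\nu}\mathbb{B}_{|\boldsymbol\nu|,\lambda}$ for all such $\boldsymbol\nu,\lambda$.
   Context: $\mathcal I:=\{\boldsymbol\nu=(\nu_j)_{j\ge1}\in\mathbb{N}_0^\infty:|\boldsymbol\nu|:=\sum_j\nu_j<\infty\}$. $\mathbf e_j$ is the multiindex with $1$ in position $j$ and $0$ elsewhere; $\mathbf m\le\boldsymbol\nu$ means $m_j\le\nu_j$ for all $j$; $\binom{\boldsymbol\nu}{\mathbf m}=\prod_j\binom{\nu_j}{m_j}$; $\boldsymbol\beta^{\boldsymbol\nu}=\prod_j\beta_j^{\nu_j}$; $\delta_{\boldsymbol\nu,\mathbf0}$ is $1$ if $\boldsymbol\nu=\mathbf0$ and $0$ otherwise. *)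

(* Multiindices nu in I are finitely supported functions
   nat -> nat; coordinate j (0-based here) is nu j, corresponding to the
   paper's coordinate j+1. All finite quantities (|nu|, beta^nu, binomials,
   sums over m <= nu) are computed relative to a support bound N with
   nu j = 0 for all j >= N; they do not depend on the choice of N. *)
From HB Require Import structures.
From mathcomp Require Import all_boot all_order all_algebra.
Set Implicit Arguments. Unset Strict Implicit. Unset Printing Implicit Defensive.
Import Order.TTheory GRing.Theory Num.Theory.
Local Open Scope ring_scope.

Definition mindex := nat -> nat.

Definition supp_below (N : nat) (nu : mindex) : Prop :=
  forall j, (N <= j)%N -> nu j = 0%N.

Definition mabs (N : nat) (nu : mindex) : nat := (\sum_(j < N) nu j)%N.

Definition unit_mi (j : nat) : mindex := fun i => nat_of_bool (i == j).

Definition maddi (nu mu : mindex) : mindex := fun i => (nu i + mu i)%N.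
Definition msubi (nu mu : mindex) : mindex := fun i => (nu i - mu i)%N.

Definition mpow {K : pzRingType} (N : nat) (beta : nat -> K) (nu : mindex) : K :=
  \prod_(j < N) beta j ^+ nu j.

Definition mbinom (N : nat) (nu m : mindex) : nat := (\prod_(j < N) 'C(nu j, m j))%N.

Definition ext_mi (N M : nat) (m : {ffun 'I_N -> 'I_M}) : mindex :=
  fun j => match insub j with Some i => nat_of_ord (m i) | None => 0%N end.

Definition msum_le {K : nmodType} (N : nat) (nu : mindex) (F : mindex -> K) : K :=
  \sum_(m : {ffun 'I_N -> 'I_(mabs N nu).+1} | [forall i, (m i <= nu i)%N])
     F (ext_mi m).

(* B_{n,lambda}: B_{n,1} = Gamma_n, B_{n,l} = sum_{i=l-1}^{n-1} C(n-1,i) Gamma_{n-i} B_{i,l-1}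
   (values at lambda = 0 are irrelevant and set to 0) *)
Fixpoint Bcoef {K : pzRingType} (Gamma : nat -> K) (lam n : nat) : K :=
  match lam with
  | 0 => 0
  | l.+1 => if l == 0%N then Gamma n
            else \sum_(l <= i < n) 'C(n.-1, i)%:R * Gamma (n - i)%N * Bcoef Gamma l i
  end.

Definition A_base {K : numDomainType} (A : mindex -> nat -> K) : Prop :=
  (forall N nu lam, supp_below N nu -> 0 <= A nu lam) /\
  (forall N nu, supp_below N nu -> A nu 0%N = (mabs N nu == 0%N)%:R) /\
  (forall N nu lam, supp_below N nu -> (mabs N nu < lam)%N -> A nu lam = 0).

Definition A_rhs {K : numDomainType} (Rc : K) (beta Gamma : nat -> K)
  (A : mindex -> nat -> K) (N : nat) (nu : mindex) (j lam : nat) : K :=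
  Rc * msum_le N nu (fun m =>
     (mbinom N nu m)%:R * mpow N beta (maddi (msubi nu m) (unit_mi j))
     * Gamma (mabs N (msubi nu m)).+1 * A m lam.-1).

Definition A_rec {K : numDomainType} (rel : K -> K -> Prop) (Rc : K)
  (beta Gamma : nat -> K) (A : mindex -> nat -> K) : Prop :=
  forall N nu j lam, supp_below N nu -> (j < N)%N ->
    (1 <= lam <= (mabs N nu).+1)%N ->
    rel (A (maddi nu (unit_mi j)) lam) (A_rhs Rc beta Gamma A N nu j lam).

From HB Require Import structures.
From mathcomp Require Import all_boot all_order all_algebra.
From mathcomp Require Import ring.
From Stdlib Require Import FunctionalExtensionality.
Import Order.TTheory GRing.Theory Num.Theory.
Local Open Scope ring_scope.

Set Implicit Arguments. Unset Strict Implicit. Unset Printing Implicit Defensive.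

(* Let C_{nu,lam} := R^lam beta^nu B_{|nu|,lam}, extended to lam = 0 and to
   lam > |nu| by the boundary values prescribed for A (this is [Bfull]).
   Substituted into the recursion, beta^(nu-m+e_j) beta^m = beta^nu beta_j
   factors out, and what remains of the sum over m <= nu depends on m only
   through binom(nu,m) and |m|.  The multinomial Vandermonde identity
   sum_{|m| = k} binom(nu,m) = binom(|nu|,k) collapses it to the one-variable
   recursion defining B, so C solves the recursion exactly.  As the recursion
   has nonnegative coefficients, induction on |nu| then compares any solution,
   or subsolution, A with C. *)

Section MultinomialVandermonde.
Variable K : comNzRingType.

Lemma coef_sum_Xn (I : finType) (d c : I -> nat) k :
  (\sum_i 'X^(d i) *+ c i : {poly K})`_k = \sum_(i | d i == k) (c i)%:R.
Proof.
rewrite coef_sum [RHS]big_mkcond; apply: eq_bigr => i _.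
by rewrite coefMn coefXn eq_sym; case: (d i == k); rewrite /= ?mulr1n ?mul0rn.
Qed.

Lemma Vandermonde_ffun N M (a : 'I_N -> nat) k : (forall i, a i < M)%N ->
  \sum_(f : {ffun 'I_N -> 'I_M} | \sum_i (f i : nat) == k)
     (\prod_i 'C(a i, f i))%N%:R = 'C(\sum_i a i, k)%:R :> K.
Proof.
move=> a_lt; set n := (\sum_i a i)%N.
have expand i : ('X + 1) ^+ a i = \sum_(b < M) 'X^b *+ 'C(a i, b) :> {poly K}.
  rewrite exprD1n (big_ord_widen M (fun b => 'X^b *+ 'C(a i, b)) (a_lt i)).
  rewrite big_mkcond /=; apply: eq_bigr => b _.
  by case: ltnP => // lt_ab; rewrite bin_small ?mulr0n.
have prod_expand : ('X + 1) ^+ n =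
    \sum_(f : {ffun 'I_N -> 'I_M}) 'X^(\sum_i (f i : nat)) *+ (\prod_i 'C(a i, f i))%N
    :> {poly K}.
  rewrite -prodrXr (eq_bigr _ (fun i _ => expand i)) bigA_distr_bigA /=.
  apply: eq_bigr => f _; rewrite -prodrXr -mulr_natr natr_prod -big_split /=.
  by apply: eq_bigr => i _; rewrite mulr_natr.
move/(congr1 (fun p : {poly K} => p`_k)): prod_expand.
rewrite coef_sum_Xn => <-; rewrite exprD1n coef_sum_Xn /=.
have [lt_kn | le_nk] := ltnP k n.+1; first by rewrite (big_pred1 (Ordinal lt_kn)).
by rewrite big_pred0 ?bin_small // => i; exact/ltn_eqF/(leq_trans (ltn_ord i) le_nk).
Qed.

Lemma sum_ffun_prod_binom N M (a : 'I_N -> nat) (h : nat -> K) : (forall i, a i < M)%N ->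
  \sum_(f : {ffun 'I_N -> 'I_M}) (\prod_i 'C(a i, f i))%N%:R * h (\sum_i (f i : nat))%N
  = \sum_(k < (\sum_i a i).+1) 'C(\sum_i a i, k)%:R * h k.
Proof.
move=> a_lt; set n := (\sum_i a i)%N.
under [RHS]eq_bigr => k _ do rewrite -(Vandermonde_ffun k a_lt) mulr_suml big_mkcond.
rewrite exchange_big /=; apply: eq_bigr => f _; set s := (\sum_i (f i : nat))%N.
have [lt_sn | le_ns] := ltnP s n.+1.
  rewrite (bigD1 (Ordinal lt_sn)) //= eqxx [X in _ + X]big1 ?addr0 // => k.
  by rewrite -val_eqE /= eq_sym => /negPf ->.
have /existsP [i lt_fi] : [exists i, (a i < f i)%N].
  apply: contraLR le_ns; rewrite negb_exists -ltnNge ltnS => /forallP le_fa.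
  by apply: leq_sum => i _; rewrite leqNgt le_fa.
rewrite (bigD1 i) //= bin_small // mul0n mul0r big1 // => k _.
by rewrite mul0r if_same.
Qed.

End MultinomialVandermonde.

Section MultiIndex.

Lemma ext_miE N M (m : {ffun 'I_N -> 'I_M}) (i : 'I_N) : ext_mi m i = m i.
Proof. by rewrite /ext_mi valK. Qed.

Lemma supp_below_ext_mi N M (m : {ffun 'I_N -> 'I_M}) : supp_below N (ext_mi m).
Proof. by move=> j le_Nj; rewrite /ext_mi insubF // ltnNge le_Nj. Qed.

Lemma ext_mi_le N M (m : {ffun 'I_N -> 'I_M}) (nu : mindex) :
  (forall i : 'I_N, m i <= nu i)%N -> forall i, (ext_mi m i <= nu i)%N.
Proof. by move=> le_m i; rewrite /ext_mi; case: insubP => [k _ <-|]. Qed.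

Lemma mabs_ext_mi N M (m : {ffun 'I_N -> 'I_M}) :
  mabs N (ext_mi m) = (\sum_i (m i : nat))%N.
Proof. by apply: eq_bigr => i _; rewrite ext_miE. Qed.

Lemma mbinom_ext_mi N M (nu : mindex) (m : {ffun 'I_N -> 'I_M}) :
  mbinom N nu (ext_mi m) = (\prod_(i < N) 'C(nu i, m i))%N.
Proof. by apply: eq_bigr => i _; rewrite ext_miE. Qed.

Lemma supp_below_msubi N nu mu : supp_below N nu -> supp_below N (msubi nu mu).
Proof. by move=> nuN j le_Nj; rewrite /msubi nuN. Qed.

Lemma leq_mabs_coord N (nu : mindex) (i : 'I_N) : (nu i <= mabs N nu)%N.
Proof. by rewrite /mabs (bigD1 i) //= leq_addr. Qed.

Lemma leq_mabs N (m nu : mindex) : (forall i, m i <= nu i)%N -> (mabs N m <= mabs N nu)%N.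
Proof. by move=> le_m; apply: leq_sum => i _. Qed.

Lemma mabsD N nu mu : mabs N (maddi nu mu) = (mabs N nu + mabs N mu)%N.
Proof. by rewrite /mabs -big_split. Qed.

Lemma mabsB N (nu m : mindex) : (forall i, m i <= nu i)%N ->
  mabs N (msubi nu m) = (mabs N nu - mabs N m)%N.
Proof. by move=> le_m; rewrite /mabs -sumnB. Qed.

Lemma mabs_unit N j : (j < N)%N -> mabs N (unit_mi j) = 1%N.
Proof.
move=> lt_jN; rewrite /mabs (bigD1 (Ordinal lt_jN)) //= /unit_mi eqxx big1 // => i.
by rewrite -val_eqE /= => /negPf ->.
Qed.

Lemma mabs_gt0 N (nu : mindex) : (0 < mabs N nu)%N -> exists i : 'I_N, (0 < nu i)%N.
Proof.
move=> nu_gt0; apply/existsP; apply: contraLR nu_gt0.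
rewrite negb_exists -leqNgt leqn0 => /forallP nu0.
by rewrite /mabs big1 // => i _; apply/eqP; rewrite -leqn0 leqNgt nu0.
Qed.

Lemma maddi_msubi_unit (nu : mindex) i :
  (0 < nu i)%N -> maddi (msubi nu (unit_mi i)) (unit_mi i) = nu.
Proof.
move=> nu_gt0; apply: functional_extensionality => k; rewrite /maddi /msubi /unit_mi.
by case: eqP => [->|_]; [rewrite subnK | rewrite subn0 addn0].
Qed.

Variables (K : comPzRingType) (beta : nat -> K).

Lemma mpowD N nu mu : mpow N beta (maddi nu mu) = mpow N beta nu * mpow N beta mu.
Proof. by rewrite /mpow -big_split; apply: eq_bigr => i _; rewrite exprD. Qed.

Lemma mpowBK N (nu m : mindex) : (forall i, m i <= nu i)%N ->
  mpow N beta (msubi nu m) * mpow N beta m = mpow N beta nu.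
Proof.
move=> le_m; rewrite /mpow -big_split; apply: eq_bigr => i _.
by rewrite /= -exprD subnK.
Qed.

Lemma mpow_unit N j : (j < N)%N -> mpow N beta (unit_mi j) = beta j.
Proof.
move=> lt_jN; rewrite /mpow (bigD1 (Ordinal lt_jN)) //= /unit_mi eqxx big1 ?mulr1 // => i.
by rewrite -val_eqE /= => /negPf ->.
Qed.

Lemma mpow_mabs0 N (nu : mindex) : mabs N nu = 0%N -> mpow N beta nu = 1.
Proof.
move/eqP; rewrite /mabs sum_nat_eq0 => /forallP nu0.
by rewrite /mpow big1 // => i _; rewrite (eqP (nu0 i)).
Qed.

End MultiIndex.

Lemma msum_le_ind2 (K : nmodType) (r : K -> K -> Prop) N nu (F G : mindex -> K) :
  r 0 0 -> (forall x1 x2 y1 y2, r x1 x2 -> r y1 y2 -> r (x1 + y1) (x2 + y2)) ->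
  (forall m, supp_below N m -> (forall i, m i <= nu i)%N -> r (F m) (G m)) ->
  r (msum_le N nu F) (msum_le N nu G).
Proof.
move=> r0 rD rFG; apply: big_ind2 => // m /forallP le_m.
exact: rFG (supp_below_ext_mi m) (ext_mi_le le_m).
Qed.

Lemma eq_msum_le (K : nmodType) N nu (F G : mindex -> K) :
  (forall m, supp_below N m -> (forall i, m i <= nu i)%N -> F m = G m) ->
  msum_le N nu F = msum_le N nu G.
Proof. by move=> FG; apply: msum_le_ind2 FG => // x1 x2 y1 y2 -> ->. Qed.

Lemma msum_le_binom (K : comNzRingType) N nu (g : nat -> K) :
  msum_le N nu (fun m => (mbinom N nu m)%:R * g (mabs N m))
  = \sum_(k < (mabs N nu).+1) 'C(mabs N nu, k)%:R * g k.
Proof.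
rewrite /msum_le big_mkcond /=.
rewrite -(sum_ffun_prod_binom (M := (mabs N nu).+1) (a := fun i => nu i) _
  (leq_mabs_coord nu)).
apply: eq_bigr => m _; rewrite mbinom_ext_mi mabs_ext_mi; case: ifP => // /forallPn [i].
by rewrite -ltnNge => lt_nu_m; rewrite (bigD1 i) //= bin_small // mul0n mul0r.
Qed.

Section BoundaryExtension.
Variables (K : pzRingType) (Gamma : nat -> K).

Definition Bfull (lam n : nat) : K :=
  if lam == 0%N then (n == 0%N)%:R
  else if (n < lam)%N then 0 else Bcoef Gamma lam n.

Lemma BcoefSS l n : Bcoef Gamma l.+2 n =
  \sum_(l.+1 <= i < n) 'C(n.-1, i)%:R * Gamma (n - i)%N * Bcoef Gamma l.+1 i.
Proof. by []. Qed.

Lemma Bfull_gt0 lam n : (0 < lam)%N ->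
  Bfull lam n = if (n < lam)%N then 0 else Bcoef Gamma lam n.
Proof. by case: lam. Qed.

Lemma Bfull_rec n lam : (1 <= lam <= n.+1)%N ->
  Bfull lam n.+1 = \sum_(k < n.+1) 'C(n, k)%:R * Gamma (n - k).+1 * Bfull lam.-1 k.
Proof.
case: lam => [|[|l]] //= le_ln.
  rewrite big_ord_recl big1 => [|k _]; last by rewrite /Bfull mulr0.
  by rewrite /Bfull /= bin0 subn0 mulr1 mul1r addr0.
rewrite Bfull_gt0 // ltnNge le_ln BcoefSS [~~ true]/=.
rewrite -(big_mkord xpredT (fun k => 'C(n, k)%:R * Gamma (n - k).+1 * Bfull l.+1 k)).
rewrite [RHS](big_cat_nat _ (n := l.+1)) ?(ltnW le_ln) //.
rewrite [X in _ = X + _]big_nat_cond [X in _ = X + _]big1 ?add0r.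
  apply: eq_big_nat => k /andP[le_lk lt_kn].
  by rewrite Bfull_gt0 // ltnNge le_lk subSn.
by move=> k /andP[/andP[_ lt_kl] _]; rewrite Bfull_gt0 // lt_kl mulr0.
Qed.

End BoundaryExtension.

Section ClosedForm.
Variables (K : numDomainType) (Rc : K) (beta Gamma : nat -> K).

Definition A_closed N (lam : nat) (nu : mindex) : K :=
  Rc ^+ lam * mpow N beta nu * Bfull Gamma lam (mabs N nu).

Lemma A_closed0 N nu : A_closed N 0 nu = (mabs N nu == 0%N)%:R.
Proof.
rewrite /A_closed /Bfull /=.
by case: eqP => [/(mpow_mabs0 beta)->|]; rewrite ?mulr0 ?mulr1.
Qed.

Lemma A_closed_gt N nu lam : (mabs N nu < lam)%N -> A_closed N lam nu = 0.
Proof. by case: lam => // lam lt_nu; rewrite /A_closed /Bfull /= lt_nu mulr0. Qed.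

Lemma A_closedE N nu lam : (1 <= lam <= mabs N nu)%N ->
  A_closed N lam nu = Rc ^+ lam * mpow N beta nu * Bcoef Gamma lam (mabs N nu).
Proof. by case: lam => // lam /= le_nu; rewrite /A_closed /Bfull /= ltnNge le_nu. Qed.

Lemma A_rhs_closed N nu j lam : (j < N)%N -> (1 <= lam <= (mabs N nu).+1)%N ->
  A_rhs Rc beta Gamma (fun m l => A_closed N l m) N nu j lam
  = A_closed N lam (maddi nu (unit_mi j)).
Proof.
move=> lt_jN; case: lam => // lam lam_range; set n := mabs N nu.
set c := Rc ^+ lam * (mpow N beta nu * beta j).
pose g k := c * (Gamma (n - k).+1 * Bfull Gamma lam k).
rewrite /A_rhs (eq_msum_le (G := fun m => (mbinom N nu m)%:R * g (mabs N m))); last first.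
  move=> m _ le_m; rewrite /A_closed mpowD mpow_unit // mabsB // /g /c.
  rewrite -[mpow N beta nu](mpowBK beta N le_m); ring.
rewrite (msum_le_binom N nu g) /A_closed mpowD mpow_unit // mabsD mabs_unit // addn1.
rewrite Bfull_rec // !mulr_sumr; apply: eq_bigr => k _.
by rewrite /g /c exprS; ring.
Qed.

End ClosedForm.

Section Comparison.
Variables (K : numDomainType) (Rc : K) (beta Gamma : nat -> K).
Hypotheses (Rc_ge0 : 0 <= Rc) (beta_ge0 : forall j, 0 <= beta j)
  (Gamma_ge0 : forall n, 0 <= Gamma n).

Variable r : K -> K -> Prop.
Hypotheses (r_refl : forall x, r x x)
  (r_trans : forall x y z, r x y -> r y z -> r x z)
  (r_add : forall x1 x2 y1 y2, r x1 x2 -> r y1 y2 -> r (x1 + y1) (x2 + y2))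
  (r_scale : forall c x y : K, 0 <= c -> r x y -> r (c * x) (c * y)).

Lemma mpow_ge0 N nu : 0 <= mpow N beta nu.
Proof. by apply: prodr_ge0 => i _; rewrite exprn_ge0. Qed.

Lemma A_rhs_mono (A B : mindex -> nat -> K) N nu j lam :
  (forall m, supp_below N m -> (forall i, m i <= nu i)%N -> r (A m lam.-1) (B m lam.-1)) ->
  r (A_rhs Rc beta Gamma A N nu j lam) (A_rhs Rc beta Gamma B N nu j lam).
Proof.
move=> AB; apply: r_scale Rc_ge0 _; apply: msum_le_ind2 => // m mN le_m.
apply: r_scale (AB m mN le_m).
by rewrite !mulr_ge0 ?ler0n ?mpow_ge0.
Qed.

Lemma rel_A_closed A N nu lam :
  A_base A -> A_rec r Rc beta Gamma A -> supp_below N nu ->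
  r (A nu lam) (A_closed Rc beta Gamma N lam nu).
Proof.
move=> [_ [A_0 A_gt]] A_r.
have [n] := ubnP (mabs N nu); elim: n => // n IH in nu lam *; rewrite ltnS => le_nu_n nuN.
have [-> | lam_gt0] := posnP lam; first by rewrite (A_0 N) // A_closed0.
have [lt_nu_lam | le_lam_nu] := ltnP (mabs N nu) lam.
  by rewrite (A_gt N) // A_closed_gt.
have [i nu_i_gt0] := mabs_gt0 (leq_trans lam_gt0 le_lam_nu).
rewrite -(maddi_msubi_unit nu_i_gt0) in le_lam_nu le_nu_n *.
set nu' := msubi nu (unit_mi i); have nu'N : supp_below N nu' := supp_below_msubi _ nuN.
rewrite mabsD mabs_unit // addn1 in le_lam_nu le_nu_n.
have lam_range : (0 < lam <= (mabs N nu').+1)%N by rewrite lam_gt0.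
apply: r_trans (A_r N nu' i lam nu'N (ltn_ord i) lam_range) _.
rewrite -(A_rhs_closed Rc beta Gamma (ltn_ord i) lam_range).
apply: A_rhs_mono => m mN le_m.
exact: IH (leq_ltn_trans (leq_mabs N le_m) le_nu_n) mN.
Qed.

End Comparison.

Theorem lemma6p1 (K : realFieldType) (Rc : K) (beta Gamma : nat -> K) :
  0 < Rc -> (forall j, 0 < beta j) -> (forall n, 0 < Gamma n) ->
  (forall A : mindex -> nat -> K,
     A_base A -> A_rec (fun x y => x = y) Rc beta Gamma A ->
     forall N nu lam, supp_below N nu -> (0 < mabs N nu)%N ->
       (1 <= lam <= mabs N nu)%N ->
       A nu lam = Rc ^+ lam * mpow N beta nu * Bcoef Gamma lam (mabs N nu)) /\
  (forall A : mindex -> nat -> K,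
     A_base A -> A_rec (fun x y => x <= y) Rc beta Gamma A ->
     forall N nu lam, supp_below N nu -> (0 < mabs N nu)%N ->
       (1 <= lam <= mabs N nu)%N ->
       A nu lam <= Rc ^+ lam * mpow N beta nu * Bcoef Gamma lam (mabs N nu)).
Proof.
move=> /ltW Rc_ge0 beta_gt0 Gamma_gt0.
have beta_ge0 j : 0 <= beta j by exact/ltW.
have Gamma_ge0 n : 0 <= Gamma n by exact/ltW.
split=> A A_b A_r N nu lam nuN _ lam_range; rewrite -A_closedE //.
  apply: (rel_A_closed Rc_ge0 beta_ge0 Gamma_ge0 (r := fun x y => x = y)) => //.
  - by move=> x y z -> ->.
  - by move=> x1 x2 y1 y2 -> ->.
  - by move=> c x y _ ->.
apply: (rel_A_closed Rc_ge0 beta_ge0 Gamma_ge0 (r := fun x y => x <= y)) => //.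
- by move=> x y z; apply: le_trans.
- exact: lerD.
- by move=> c x y c_ge0; apply: ler_wpM2l.
Qed.
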